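(* Let $\Theta$ be an MLL proof structure. If some run of Algorithm A on input $\Theta$ terminates in Step 5 with output no, then $\Theta$ is not an MLL proof net.
   Context: MLL formulas (with a single atom $p$) are given by $F ::= p \mid p^\bot \mid F\otimes G \mid F \wp G$, where $\wp$ denotes par. MLL links are: an ID-link, with two conclusions $p$ and $p^\bot$; a $\otimes$-link, with left premise $F$, right premise $G$ and conclusion $F\otimes G$; a $\wp$-link, with left premise $F$, right premise $G$ and conclusion $F\wp G$. An MLL proof structure $\Theta$ is a finite set of links such that each conclusion of a link is a premise of at most one other link, and each premise of a link is a conclusion of exactly one other link; a conclusion of $\Theta$ is a formula occurrence that is not a premise of any link. MLL proof nets are defined inductively: a single ID-link is a proof net; if $\Theta_1,\Theta_2$ are disjoint proof nets with conclusions $F$, $G$, adding a $\otimes$-link with premises $F,G$ gives a proof net; if $\Theta$ is a proof net with conclusions $F,G$, adding a $\wp$-link with left premise $F$ and right premise $G$ gives a proof net. Extreme-left DR-graph $S_{\forall\ell}(\Theta)$: the undirected graph on formula occurrences in which each ID-link joins its two conclusions, each $\otimes$-link joins its conclusion to both premises, and each $\wp$-link joins its conclusion to its left premise only. deNM-trees: finite trees with labeled nodes (carrying a label set of symbols $\ell_L$, $r_L$, $L$ a $\wp$-link) and $\wp$-nodes (labeled by a $\wp$-link $L$, of degree 1 or 2, with a port ''above'' and a port ''below''; a degree-1 $\wp$-node is attached only through its port above). Translation $T(\Theta)$ (undefined unless $S_{\forall\ell}(\Theta)$ is a tree). If $\Theta$ is a single ID-link, $T(\Theta)$ is one degree-0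 labeled node with label set $\emptyset$. Otherwise each link $L$ gives a piece: (i) ID-link, case 1: one conclusion $F$ is the right premise of a $\wp$-link $L'$ or a conclusion of $\Theta$; if $F^\bot$ is a premise of a $\wp$-link, $T(\Theta)$ is undefined; otherwise a degree-1 labeled node attached to the piece of the link having $F^\bot$ as premise, labeled $\{r_{L'}\}$ if $F$ is the right premise of $L'$ and $\emptyset$ otherwise. Case 2 (otherwise): if both conclusions are premises of $\wp$-links, undefined; otherwise a degree-2 labeled node attached to the pieces of the links having the conclusions as premises, labeled $\{\ell_{L'}\}$ if a conclusion is the left premise of a $\wp$-link $L'$, else $\emptyset$. (ii) $\otimes$-link, case 1 (conclusion is a conclusion of $\Theta$ or right premise of a $\wp$-link $L'$): a degree-2 labeled node attached to the pieces of the links producing its premises, labeled $\{r_{L'}\}$ or $\emptyset$ accordingly; case 2 (otherwise): a degree-3 labeled node attached additionally to the piece of the link having its conclusion as premise, labeled $\{\ell_{L'}\}$ if the conclusion is the left premise of a $\wp$-link $L'$, else $\emptyset$. (iii) $\wp$-link $L$: a $\wp$-node $n_L$ whose port above is attached to the piece of the link producing the left premise of $L$; case 1 (conclusion is the right premise of $\wp$-link $L'$): port below attached to a degree-1 labeled node labeled $\{r_{L'}\}$; case 2 (conclusion is the left premise of $\wp$-link $L'$): port below attached to a degree-2 labeled node labeled $\{\ell_{L'}\}$ which is attached to the port above of $n_{L'}$; case 3 (otherwise): only $n_L$, of degree 1 if its conclusion is a conclusion of $\Theta$, else its port below is attached to the piece of the link having its conclusion as premise. $T(\Theta)$ connects all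 pieces. Rewriting with one designated active labeled node: ($\wp$-elimination) if the active node $n$ is adjacent to a $\wp$-node $n_L$ through $n_L$'s port above and $n$'s label set contains $\ell_L$ and $r_L$, delete $n_L$ (its neighbour through the port below, if any, becomes adjacent to $n$); (union) if the active node is adjacent to a labeled node, merge them into one active node labeled by the union of label sets; (local jump) if the active node is adjacent to a $\wp$-node $n_L$ through $n_L$'s port below, the active node becomes the labeled node whose label set contains $r_L$ (tree unchanged). $S_{\rm full}$ is the set of all $\ell_L, r_L$ for $\wp$-links $L$ of $\Theta$. Algorithm A on input $\Theta$: (1) if $T(\Theta)$ is undefined, output no; (2) select an arbitrary labeled node as active; (3) rewrite using the three rules (in any order); (4) if local jump is applied to a $\wp$-node to which it was already applied, output no; (5) when no rule applies to the current tree $T'$, output yes if $T'$ is exactly one degree-0 node with label set $S_{\rm full}$, and no otherwise. *)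

From mathcomp Require Import all_boot.
From Stdlib Require Permutation.

Set Implicit Arguments.
Unset Strict Implicit.
Unset Printing Implicit Defensive.

Inductive formula : Type :=
  | Atom
  | NegAtom
  | Tens of formula & formula
  | Par of formula & formula.

(* Formula occurrences are named by natural numbers; a labelling
   [lab : nat -> formula] gives the formula of each occurrence.       *)
Inductive link : Type :=
  | IDL of nat & nat              (* IDL a b : conclusions a : p, b : p^bot *)
  | TensL of nat & nat & nat
  | ParL of nat & nat & nat.

Definition concls (L : link) : seq nat :=
  match L with IDL a b => [:: a; b] | TensL _ _ c => [:: c] | ParL _ _ c => [:: c] end.
Definition prems (L : link) : seq nat :=
  match L with IDL _ _ => [::] | TensL l r _ => [:: l; r] | ParL l r _ => [:: l; r] end.
Definition isPar (L : link) : bool := if L is ParL _ _ _ then true else false.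
(* a name for each link: the p-conclusion of an ID link, the conclusion otherwise *)
Definition key (L : link) : nat :=
  match L with IDL a _ => a | TensL _ _ c => c | ParL _ _ c => c end.

(* all formula occurrences of a set of links (= all link conclusions) *)
Definition occs (ls : seq link) : seq nat := flatten (map concls ls).
Definition allprems (ls : seq link) : seq nat := flatten (map prems ls).

Definition typed (lab : nat -> formula) (L : link) : Prop :=
  match L with
  | IDL a b => lab a = Atom /\ lab b = NegAtom
  | TensL l r c => lab c = Tens (lab l) (lab r)
  | ParL l r c => lab c = Par (lab l) (lab r)
  end.

(* MLL proof structure: a finite set of (well typed) links such that each
   occurrence is the conclusion of exactly one link, each conclusion is a
   premise of at most one link, and each premise is a conclusion of exactly
   one other link. *)
Definition proof_structure (ls : seq link) (lab : nat -> formula) : Prop :=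
  [/\ uniq (occs ls),
      uniq (allprems ls),
      all (fun L => all (fun x => (x \in occs ls) && (x \notin concls L)) (prems L)) ls
    & forall L, List.In L ls -> typed lab L].

Definition pconcls (ls : seq link) : seq nat :=
  [seq x <- occs ls | x \notin allprems ls].

(* MLL proof nets, inductively (links form a set: closed under permutation). *)
Inductive is_net (lab : nat -> formula) : seq link -> Prop :=
  | net_ax a b : a != b -> lab a = Atom -> lab b = NegAtom -> is_net lab [:: IDL a b]
  | net_tens s1 s2 l r c :
      is_net lab s1 -> is_net lab s2 ->
      (forall x, x \in occs s1 -> x \notin occs s2) ->
      l \in pconcls s1 -> r \in pconcls s2 ->
      c \notin occs s1 -> c \notin occs s2 ->
      lab c = Tens (lab l) (lab r) ->
      is_net lab (TensL l r c :: s1 ++ s2)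
  | net_par s l r c :
      is_net lab s ->
      l \in pconcls s -> r \in pconcls s -> l != r ->
      c \notin occs s ->
      lab c = Par (lab l) (lab r) ->
      is_net lab (ParL l r c :: s)
  | net_perm s s' : Permutation.Permutation s s' -> is_net lab s -> is_net lab s'.

(* Extreme-left DR-graph and tree-ness.                                 *)
Definition sl_adj (ls : seq link) (x y : nat) : bool :=
  has (fun L => match L with
                | IDL a b => ((x == a) && (y == b)) || ((x == b) && (y == a))
                | TensL l r c => ((x == c) && ((y == l) || (y == r)))
                                 || ((y == c) && ((x == l) || (x == r)))
                | ParL l _ c => ((x == c) && (y == l)) || ((y == c) && (x == l))
                end) ls.

Definition is_tree (V : seq nat) (e : rel nat) : Prop :=
  [/\ V != [::],
      (forall x y, x \in V -> y \in V -> exists p, path e x p /\ last x p = y)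
    & ~ (exists s : seq nat, [/\ 3 <= size s, uniq s, all (mem V) s & cycle e s])].

Definition SL_is_tree (ls : seq link) : Prop := is_tree (occs ls) (sl_adj ls).

(* Node names: inl k = the labelled node of the ID/tensor link with key k;
               inr c = the extra labelled node created for the par link with
                       conclusion c.  Par-nodes are named by (the conclusion
                       of) their par link.
   Label symbols: inl c = l_L, inr c = r_L for the par link L of conclusion c. *)
Definition nid := (nat + nat)%type.
Definition sym := (nat + nat)%type.
Definition ell (c : nat) : sym := inl c.
Definition rgt (c : nat) : sym := inr c.

Record deNM := mkT {
  LN   : seq nid;
  lbl  : nid -> seq sym;
  PN   : seq nat;
  up   : nat -> nid;          (* neighbour through the port above *)
  down : nat -> option nid;   (* neighbour through the port below, if any *)
  ladj : nid -> nid -> bool   (* adjacency between labelled nodes *)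
}.

Section Translation.
Variable ls : seq link.

Definition producer (x : nat) : option link := ohead [seq L <- ls | x \in concls L].
Definition consumer (x : nat) : option link := ohead [seq L <- ls | x \in prems L].

Definition is_right_par_prem (x : nat) : bool :=
  if consumer x is Some (ParL _ r _) then x == r else false.
Definition is_par_prem (x : nat) : bool :=
  if consumer x is Some (ParL _ _ _) then true else false.
Definition is_concl (x : nat) : bool := if consumer x is None then true else false.

Definition labelOf (x : nat) : seq sym :=
  match consumer x with
  | Some (ParL l _ c) => if x == l then [:: ell c] else [:: rgt c]
  | _ => [::]
  end.

(* the node of the piece of the producer of x through which x is attached below *)
Definition node_for (x : nat) : nid :=
  match producer x with
  | Some (ParL _ _ p) => inr p
  | Some L => inl (key L)
  | None => inl x
  end.

(* ID-link side conditions of the translation (cases 1 and 2) *)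
Definition id_ok (a b : nat) : bool :=
  let rc x := is_right_par_prem x || is_concl x in
  if rc a then ~~ is_par_prem b
  else if rc b then ~~ is_par_prem a
  else ~~ (is_par_prem a && is_par_prem b).

Definition ids_ok : bool :=
  all (fun L => if L is IDL a b then id_ok a b else true) ls.

Definition T_LN : seq nid :=
  [seq inl (key L) | L <- ls & ~~ isPar L] ++
  [seq inr (key L) | L <- ls & isPar L && is_par_prem (key L)].

Definition T_lbl (n : nid) : seq sym :=
  match n with
  | inl k => if producer k is Some L then flatten [seq labelOf x | x <- concls L] else [::]
  | inr p => labelOf p
  end.

Definition T_PN : seq nat := [seq key L | L <- ls & isPar L].

Definition T_up (c : nat) : nid :=
  if producer c is Some (ParL l _ _) then node_for l else inl c.

Definition T_down (c : nat) : option nid :=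
  match consumer c with
  | Some (ParL _ _ _) => Some (inr c)
  | Some (TensL _ _ t) => Some (inl t)
  | _ => None
  end.

Definition T_ladj (u v : nid) : bool :=
  has (fun x => match consumer x, producer x with
                | Some (TensL _ _ t), Some L =>
                    ~~ isPar L &&
                    (((u == inl (key L)) && (v == inl t)) || ((v == inl (key L)) && (u == inl t)))
                | _, _ => false
                end) (occs ls).

End Translation.

(* T(Theta): [T_defined ls] says the translation is defined (Step 1),
   and then [T_tree ls] is the translated deNM-tree. *)
Definition T_defined (ls : seq link) : Prop :=
  (exists a b, ls = [:: IDL a b]) \/ (SL_is_tree ls /\ ids_ok ls).

Definition T_tree (ls : seq link) : deNM :=
  match ls with
  | [:: IDL a _] =>  (* one degree-0 labelled node with empty label set *)
      mkT [:: inl a] (fun _ => [::]) [::] (fun c => inl c) (fun _ => None) (fun _ _ => false)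
  | _ => mkT (T_LN ls) (T_lbl ls) (T_PN ls) (T_up ls) (T_down ls) (T_ladj ls)
  end.

Definition S_full (ls : seq link) : seq sym :=
  [seq ell (key L) | L <- ls & isPar L] ++ [seq rgt (key L) | L <- ls & isPar L].

Definition par_elim (t : deNM) (a : nid) (t' : deNM) : Prop :=
  exists L, [/\ L \in PN t, up t L = a, ell L \in lbl t a, rgt L \in lbl t a &
    t' = mkT (LN t) (lbl t) [seq L' <- PN t | L' != L] (up t) (down t)
             (fun u v => ladj t u v ||
                 (if down t L is Some m then ((u == a) && (v == m)) || ((u == m) && (v == a))
                  else false))].

Definition merge (t : deNM) (a b : nid) : deNM :=
  let ren x := if x == b then a else x in
  mkT [seq n <- LN t | n != b]
      (fun n => if n == a then lbl t a ++ lbl t b else lbl t n)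
      (PN t)
      (fun L => ren (up t L))
      (fun L => omap ren (down t L))
      (fun u v => [&& u != b, v != b, u != v &
                     ladj t u v || ((u == a) && ladj t b v) || ((v == a) && ladj t u b)]).

Definition union_rule (t : deNM) (a : nid) (t' : deNM) : Prop :=
  exists b, [/\ b \in LN t, b != a, ladj t a b & t' = merge t a b].

(* local jump on the par-node L: the tree is unchanged, the active node
   moves from a to b *)
Definition local_jump (t : deNM) (a : nid) (L : nat) (b : nid) : Prop :=
  [/\ L \in PN t, down t L = Some a, b \in LN t & rgt L \in lbl t b].

Definition stuck (t : deNM) (a : nid) : Prop :=
  [/\ ~ (exists t', par_elim t a t'),
      ~ (exists t', union_rule t a t')
    & ~ (exists L b, local_jump t a L b)].

(* partial runs of Step 3 from (t0, a0), never applying local jump twice to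
   the same par-node (otherwise Step 4 would output no); J records the
   par-nodes on which local jump has been applied *)
Inductive run (t0 : deNM) (a0 : nid) : deNM -> nid -> seq nat -> Prop :=
  | run_start : run t0 a0 t0 a0 [::]
  | run_elim t a J t' : run t0 a0 t a J -> par_elim t a t' -> run t0 a0 t' a J
  | run_union t a J t' : run t0 a0 t a J -> union_rule t a t' -> run t0 a0 t' a J
  | run_jump t a J L b : run t0 a0 t a J -> local_jump t a L b -> L \notin J ->
                         run t0 a0 t b (L :: J).

(* Step 5 "yes" condition: exactly one degree-0 node, with label set S_full *)
Definition accepting (ls : seq link) (t : deNM) : Prop :=
  exists n, [/\ LN t = [:: n], PN t = [::] & lbl t n =i S_full ls].

Definition algoA_no_at_step5 (ls : seq link) : Prop :=
  T_defined ls /\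
  exists a0 t a J, [/\ a0 \in LN (T_tree ls), run (T_tree ls) a0 t a J, stuck t a
                     & ~ accepting ls t].

(* The invariant behind Algorithm A is a correctness criterion in the style of
   Danos and Regnier. In a switching graph of a deNM-tree every par-node L is
   joined to its neighbour below and to ONE labelled node: either its neighbour
   above, or a node carrying r_L, i.e. a possible target of a local jump on L.
   If Theta is a proof net, every switching graph of T(Theta) is connected: a
   switching of T(Theta) induces a DR-switching of Theta (keep the left premise
   of L iff L chooses its neighbour above), the DR-graph of a proof net is
   connected, and T maps DR-edges to paths. Union and par-elimination preserve
   the connectedness of all switching graphs, and local jumps do not change the
   tree. When no rule applies, sending each par-node above the active node a to
   a node carrying its r-label gives a switching graph in which a is isolated,
   so the tree is the single node a, labelled S_full: Algorithm A answers yes. *)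

From HB Require Import structures.
From Pilot Require Import Defs.
From mathcomp Require Import all_boot.
From Stdlib Require Import Relations.
From Stdlib Require Permutation.

Set Implicit Arguments.
Unset Strict Implicit.
Unset Printing Implicit Defensive.

#[local] Arguments rst_step {A R x y}.
#[local] Arguments rst_sym {A R x y}.
#[local] Arguments rst_trans {A R x y z}.

Lemma link_eq_dec : comparable link.
Proof. rewrite /comparable /decidable; do !decide equality. Qed.

HB.instance Definition _ := comparableMixin link_eq_dec.

Lemma InP (T : eqType) (x : T) (s : seq T) : reflect (List.In x s) (x \in s).
Proof.
elim: s => [|y s IH] /=; first by right.
by rewrite in_cons; apply: (iffP orP) => [[/eqP ->|/IH]|[->|/IH]]; auto.
Qed.

Lemma Permutation_mem (T : eqType) (s s' : seq T) : Permutation.Permutation s s' -> s =i s'.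
Proof.
move=> P x; apply/InP/InP; apply: Permutation.Permutation_in => //.
exact: Permutation.Permutation_sym.
Qed.

Lemma ohead_mem (T : eqType) (s : seq T) x : ohead s = Some x -> x \in s.
Proof. by case: s => //= y s [->]; apply: mem_head. Qed.

Lemma ohead_filter_unique (T : eqType) (p : pred T) (s : seq T) x :
  x \in s -> p x -> {in s, forall y, p y -> y = x} -> ohead (filter p s) = Some x.
Proof.
move=> xs px uniq_p; have : x \in filter p s by rewrite mem_filter px.
case E: (filter p s) => [//|y s'] _ /=; congr Some.
have : y \in filter p s by rewrite E mem_head.
by rewrite mem_filter => /andP [py ys]; apply: uniq_p.
Qed.

Section FlattenMap.
Variables (S T : eqType) (f : S -> seq T).

Lemma uniq_flatten_map_eq (s : seq S) a b x : uniq (flatten (map f s)) ->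
  a \in s -> b \in s -> x \in f a -> x \in f b -> a = b.
Proof.
elim: s => //= c s IH; rewrite cat_uniq => /and3P [_ /hasPn disj rest_uniq].
have notin_rest d : d \in s -> x \in f c -> x \in f d -> False.
  move=> ds xc xd; have /disj : x \in flatten (map f s) by apply/flatten_mapP; exists d.
  by rewrite xc.
rewrite !in_cons => /orP [/eqP ->|as_] /orP [/eqP ->|bs] //.
- by move=> xc /(notin_rest _ bs xc).
- by move=> xa xc; case: (notin_rest _ as_ xc xa).
- exact: IH.
Qed.

Lemma uniq_map_of_flatten (g : S -> T) (s : seq S) :
  (forall a, g a \in f a) -> uniq (flatten (map f s)) -> uniq (map g s).
Proof.
move=> gf; elim: s => //= c s IH; rewrite cat_uniq => /and3P [_ /hasPn disj /IH ->].
rewrite andbT; apply/mapP => -[d ds gcd].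
have /disj : g c \in flatten (map f s) by apply/flatten_mapP; exists d; rewrite ?gcd.
by rewrite gf.
Qed.

Lemma uniq_flatten_map_mem (s : seq S) a : uniq (flatten (map f s)) -> a \in s -> uniq (f a).
Proof.
elim: s => //= c s IH; rewrite cat_uniq => /and3P [fc _ /IH {}IH].
by rewrite in_cons => /orP [/eqP ->|/IH].
Qed.

End FlattenMap.

Section Closure.
Variables (A B : Type).

Lemma crst_map (R : relation A) (R' : relation B) (f : A -> B) :
  (forall x y, R x y -> clos_refl_sym_trans B R' (f x) (f y)) ->
  forall x y, clos_refl_sym_trans A R x y -> clos_refl_sym_trans B R' (f x) (f y).
Proof.
move=> Rf x y; elim=> {x y} [x y /Rf //|x|x y _ IH|x y z _ IH1 _ IH2].
- exact: rst_refl.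
- exact: rst_sym.
- exact: rst_trans IH2.
Qed.

Lemma crst_isolated (R : relation A) c : (forall v, R c v \/ R v c -> v = c) ->
  forall y, clos_refl_sym_trans A R c y -> y = c.
Proof.
move=> iso; suff crst_c x y : clos_refl_sym_trans A R x y -> x = c <-> y = c.
  by move=> y /crst_c [+ _]; apply.
elim=> {x y} [x y xy|x|x y _ [? ?]|x y z _ [? ?] _ [? ?]]; try by split; auto.
by split=> E; rewrite E in xy; apply: iso; auto.
Qed.

End Closure.

(** * Switching graphs of deNM-trees *)

Definition vertex := (nid + nat)%type.

Definition is_vertex (t : deNM) (x : vertex) : bool :=
  match x with inl n => n \in LN t | inr L => L \in PN t end.

Definition switching (t : deNM) (sg : nat -> nid) : Prop :=
  forall L, L \in PN t -> sg L = up t L \/ (sg L \in LN t /\ rgt L \in lbl t (sg L)).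

Definition switch_edge (t : deNM) (sg : nat -> nid) (x y : vertex) : bool :=
  match x, y with
  | inl u, inl v => ladj t u v
  | inl u, inr L => (L \in PN t) && ((down t L == Some u) || (sg L == u))
  | inr _, _ => false
  end.

Definition switch_path (t : deNM) (sg : nat -> nid) : relation vertex :=
  clos_refl_sym_trans vertex (fun x y => switch_edge t sg x y).

Definition switch_connected (t : deNM) : Prop :=
  forall sg, switching t sg ->
  forall x y, is_vertex t x -> is_vertex t y -> switch_path t sg x y.

Record wf_deNM (ls : seq link) (t : deNM) : Prop := {
  LN_uniq : uniq (LN t);
  ell_up : forall L, L \in PN t -> ell L \in lbl t (up t L);
  S_fullE : forall s, s \in S_full ls <-> exists2 n, n \in LN t & s \in lbl t n;
  rgt_S_full : forall L, L \in PN t -> rgt L \in S_full ls;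
  ladjC : forall u v, ladj t u v = ladj t v u;
  ladj_LN : forall u v, ladj t u v -> u \in LN t;
  down_LN : forall L m, L \in PN t -> down t L = Some m -> m \in LN t;
  wf_connected : switch_connected t
}.

Arguments ell_up {ls t} _ {L}.
Arguments rgt_S_full {ls t} _ {L}.
Arguments ladj_LN {ls t} _ {u v}.
Arguments down_LN {ls t} _ {L m}.

Definition drop_par (t : deNM) (a : nid) (L0 : nat) : deNM :=
  mkT (LN t) (lbl t) [seq L <- PN t | L != L0] (up t) (down t)
      (fun u v => ladj t u v ||
         (if down t L0 is Some m then ((u == a) && (v == m)) || ((u == m) && (v == a))
          else false)).

Lemma switch_connected_drop_par t a L0 :
  up t L0 = a -> switch_connected t -> switch_connected (drop_par t a L0).
Proof.
move=> upa conn sg' sw' x y; pose sg L := if L == L0 then a else sg' L.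
have sw : switching t sg.
  move=> L LP; rewrite /sg; case: eqP => [->|/eqP ne]; first by left.
  by apply: sw'; rewrite /= mem_filter ne.
pose f (x : vertex) : vertex := if x == inr L0 then inl a else x.
have f_inr L : L != L0 -> f (inr L) = inr L.
  by rewrite /f => ne; case: eqP => // -[E]; rewrite E eqxx in ne.
have fixed z : is_vertex (drop_par t a L0) z -> is_vertex t z /\ f z = z.
  by case: z => [n|L] //=; rewrite mem_filter => /andP [/f_inr -> ->].
move=> /fixed [xt <-] /fixed [yt <-].
apply: crst_map (conn sg sw x y xt yt) => {x y xt yt} [[u|//]] [v|L] /= e.
  by apply: rst_step; rewrite /= e.
case: (eqVneq L L0) e => [->|ne].
  move=> /andP [_]; rewrite /f /sg !eqxx => /orP [/eqP dL0|/eqP <-]; last exact: rst_refl.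
  by apply: rst_step; rewrite /= dL0 !eqxx /= !orbT.
rewrite /sg (negbTE ne) f_inr // => /andP [LP e].
by apply: rst_step; rewrite /= mem_filter ne LP.
Qed.

Definition rename (a b x : nid) : nid := if x == b then a else x.

Lemma merge_switching_lift t a b sg' : b \in LN t -> a != b ->
  switching (Defs.merge t a b) sg' ->
  exists2 sg, switching t sg & {in PN t, forall L, rename a b (sg L) = sg' L}.
Proof.
move=> bL ab sw'.
pose sg L := if sg' L == rename a b (up t L) then up t L
             else if (sg' L == a) && (rgt L \notin lbl t a) then b else sg' L.
have lift L : L \in PN t ->
    (sg L = up t L \/ (sg L \in LN t /\ rgt L \in lbl t (sg L))) /\ rename a b (sg L) = sg' L.
  move=> LP; rewrite /sg; case: eqP => [-> //|ne]; first by split; [left|].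
  have [/= E|[/=]] := sw' L LP; first by rewrite E in ne.
  rewrite mem_filter => /andP [sb sL]; case: (eqVneq (sg' L) a) sL => [->|nea] sL /=.
    rewrite mem_cat; case: ifP => /= [/negP rb rab|/negbFE ra _].
      by rewrite /rename eqxx; split=> //; right; split=> //; case/orP: rab.
    by rewrite /rename (negbTE ab); split=> //; right.
  by move=> r; rewrite /rename (negbTE sb); split=> //; right.
by exists sg => L /lift [].
Qed.

Lemma switch_connected_merge t a b : b \in LN t -> a != b ->
  switch_connected t -> switch_connected (Defs.merge t a b).
Proof.
move=> bL ab conn sg' /(merge_switching_lift bL ab) [sg sw sgE] x y.
pose f (x : vertex) : vertex := if x is inl u then inl (rename a b u) else x.
have fixed z : is_vertex (Defs.merge t a b) z -> is_vertex t z /\ f z = z.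
  case: z => [n|L] //=; rewrite mem_filter => /andP [nb ->].
  by rewrite /rename (negbTE nb).
have ren_b u : rename a b u != b by rewrite /rename; case: (eqVneq u b).
move=> /fixed [xt <-] /fixed [yt <-].
apply: crst_map (conn sg sw x y xt yt) => {x y xt yt} [[u|//]] [v|L] /= e.
  case: (eqVneq (rename a b u) (rename a b v)) => [->|ne]; first exact: rst_refl.
  apply: rst_step; rewrite /= !ren_b ne /=; move: ne.
  rewrite /rename; case: (eqVneq u b) e => [->|ub] e; case: (eqVneq v b) e => [->|vb] e;
    by rewrite ?eqxx ?e ?orbT.
case/andP: e => LP /orP [/eqP dL|/eqP sL]; apply: rst_step; rewrite /= LP.
  by rewrite dL eqxx.
by rewrite -sgE // sL eqxx orbT.
Qed.

Lemma par_elim_wf ls t a t' : wf_deNM ls t -> a \in LN t -> par_elim t a t' -> wf_deNM ls t'.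
Proof.
move=> w aL [L0 [L0P upa _ _ ->]].
have PN_drop L : L \in [seq L' <- PN t | L' != L0] -> L \in PN t.
  by rewrite mem_filter => /andP [].
constructor => /=.
- exact: LN_uniq w.
- by move=> L /PN_drop /(ell_up w).
- exact: S_fullE w.
- by move=> L /PN_drop /(rgt_S_full w).
- move=> u v; rewrite (ladjC w); congr orb; case: (down t L0) => // m.
  by rewrite orbC; congr orb; apply: andbC.
- move=> u v /orP [/(ladj_LN w) //|]; case E: (down t L0) => [m|] //.
  case/orP => /andP [/eqP -> _] //.
  exact: (down_LN w L0P E).
- by move=> L m /PN_drop LP /(down_LN w LP).
- exact: switch_connected_drop_par upa (wf_connected w).
Qed.

Lemma union_wf ls t a t' : wf_deNM ls t -> a \in LN t -> union_rule t a t' -> wf_deNM ls t'.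
Proof.
move=> w aL [b [bL ba ab ->]]; have a_b : a != b by rewrite eq_sym.
have LN_merge n : (n \in [seq n <- LN t | n != b]) = (n \in LN t) && (n != b).
  by rewrite mem_filter andbC.
have rename_LN n : n \in LN t -> rename a b n \in [seq n <- LN t | n != b].
  by rewrite LN_merge /rename; case: (eqVneq n b) => [_|->]; rewrite ?aL ?andbT.
constructor => /=.
- by rewrite filter_uniq // (LN_uniq w).
- move=> L /(ell_up w); case: (eqVneq (up t L) b) => [->|ub] ell_L.
    by rewrite eqxx mem_cat ell_L orbT.
  by case: eqP => [<-|//]; rewrite mem_cat ell_L.
- move=> s; rewrite (S_fullE w); split=> [[n nL sn]|[n]].
    case: (eqVneq n b) sn => [->|nb] sn.
      by exists a; rewrite ?LN_merge ?aL // eqxx mem_cat sn orbT.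
    by exists n; rewrite ?LN_merge ?nL //; case: eqP => [<-|//]; rewrite mem_cat sn.
  rewrite LN_merge => /andP [nL _]; case: eqP => [_|_ sn]; last by exists n.
  by rewrite mem_cat => /orP [sa|sb]; [exists a|exists b].
- exact: rgt_S_full w.
- move=> u v; rewrite (ladjC w u v) (ladjC w b v) (ladjC w u b).
  by case: (u == b); case: (v == b); rewrite ?andbF //= eq_sym;
    case: (v == u); rewrite //= orbAC.
- move=> u v /and4P [ub _ _ /orP [/orP [/(ladj_LN w) uL|/andP [/eqP -> _]]|]];
    last case/andP=> _ /(ladj_LN w) uL; by rewrite LN_merge ?uL ?aL.
- move=> L m LP; case E: (down t L) => [m0|] //= [<-].
  exact: rename_LN (down_LN w LP E).
- exact: switch_connected_merge bL a_b (wf_connected w).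
Qed.

Lemma run_wf ls t0 a0 t a J : wf_deNM ls t0 -> a0 \in LN t0 -> run t0 a0 t a J ->
  wf_deNM ls t /\ a \in LN t.
Proof.
move=> w0 a0L; elim=> {t a J} [//|t a J t' _ [w aL] el|t a J t' _ [w aL] un|].
- by split; [apply: par_elim_wf el|case: el => L [_ _ _ _ ->]].
- split; first exact: union_wf un.
  by case: un => b [_ ba _ ->]; rewrite /= mem_filter eq_sym ba.
- by move=> t a J L b _ [w _] [].
Qed.

Lemma rgt_holder ls t L : wf_deNM ls t -> L \in PN t ->
  exists2 b, b \in LN t & rgt L \in lbl t b.
Proof. by move=> w /(rgt_S_full w) /(S_fullE w). Qed.

Section Stuck.
Variables (ls : seq link) (t : deNM) (a : nid).
Hypotheses (w : wf_deNM ls t) (aL : a \in LN t) (st : stuck t a).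

Let holder L := nth a (LN t) (find (fun b => rgt L \in lbl t b) (LN t)).
Let sg L := if up t L == a then holder L else up t L.

Lemma holderP L : L \in PN t -> holder L \in LN t /\ rgt L \in lbl t (holder L).
Proof.
move=> /(rgt_holder w) [b bL rb].
have has_r : has (fun b => rgt L \in lbl t b) (LN t) by apply/hasP; exists b.
by split; [apply: mem_nth; rewrite -has_find|exact: (nth_find a has_r)].
Qed.

Lemma stuck_switching : switching t sg.
Proof.
move=> L LP; rewrite /sg; case: eqP => _; last by left.
by right; apply: holderP LP.
Qed.

(* An edge at [a] would make a rule applicable: union along [ladj], a local
   jump through a port below, and par-elimination when a par-node above [a]
   chooses [a] itself. *)
Lemma stuck_isolated v : switch_edge t sg (inl a) v \/ switch_edge t sg v (inl a) -> v = inl a.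
Proof.
have [no_elim no_union no_jump] := st.
have ladj_a u : ladj t a u -> inl u = inl a :> vertex.
  move=> au; case: (eqVneq u a) => [-> //|ua]; case: no_union.
  exists (Defs.merge t a u), u; split=> //.
  by rewrite (ladjC w) in au; exact: (ladj_LN w au).
case: v => [u|L] [] //=; [exact: ladj_a|rewrite (ladjC w); exact: ladj_a|].
case/andP=> LP /orP [/eqP dL|/eqP sL].
  by case: no_jump; exists L, (holder L); have [] := holderP LP.
move: sL; rewrite /sg; case: (eqVneq (up t L) a) => [upa ha|ne uL]; last by rewrite uL eqxx in ne.
case: no_elim; eexists; exists L; split=> //; last by rewrite -ha; case: (holderP LP).
by rewrite -upa; apply: (ell_up w LP).
Qed.

Lemma stuck_accepting : accepting ls t.
Proof.
have all_a x : is_vertex t x -> x = inl a.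
  have aV : is_vertex t (inl a) := aL.
  by move=> xt; apply: crst_isolated stuck_isolated _ (wf_connected w stuck_switching aV xt).
exists a; split.
- apply: perm_small_eq => //; apply: uniq_perm (LN_uniq w) _ _ => // n.
  by rewrite inE; apply/idP/eqP => [/(all_a (inl n)) [] //|->].
- case E: (PN t) => [//|L s].
  by have := all_a (inr L); rewrite /= E mem_head => /(_ isT).
- move=> s; apply/idP/idP => [sa|/(S_fullE w) [n /(all_a (inl n)) [->]] //].
  by apply/(S_fullE w); exists a.
Qed.

End Stuck.

(** * Danos-Regnier graphs of proof nets *)

Lemma occs_cat s1 s2 : occs (s1 ++ s2) = occs s1 ++ occs s2.
Proof. by rewrite /occs map_cat flatten_cat. Qed.

Lemma eq_mem_occs s s' : s =i s' -> occs s =i occs s'.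
Proof.
move=> ss' x; apply/flatten_mapP/flatten_mapP => -[L Ls xL]; exists L => //.
  by rewrite -ss'.
by rewrite ss'.
Qed.

Lemma pconcls_occs ls x : x \in pconcls ls -> x \in occs ls.
Proof. by rewrite mem_filter => /andP []. Qed.

Definition dr_edge (s : nat -> bool) (L : link) (x y : nat) : bool :=
  match L with
  | IDL a b => (x == a) && (y == b)
  | TensL l r c => (x == c) && ((y == l) || (y == r))
  | ParL l r c => (x == c) && (y == if s c then l else r)
  end.

Definition dr_path (s : nat -> bool) (ls : seq link) : relation nat :=
  clos_refl_sym_trans nat (fun x y => exists2 L, L \in ls & dr_edge s L x y).

Lemma dr_path_sub s ls ls' x y : {subset ls <= ls'} -> dr_path s ls x y -> dr_path s ls' x y.
Proof.
move=> sub; apply: (crst_map (f := id)) => u v [L Ls e].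
by apply: rst_step; exists L; rewrite ?sub.
Qed.

Lemma dr_path_link s ls L x y : L \in ls -> dr_edge s L x y -> dr_path s ls x y.
Proof. by move=> Ls e; apply: rst_step; exists L. Qed.

Lemma dr_path_root s ls c : (forall x, x \in occs ls -> dr_path s ls x c) ->
  {in occs ls &, forall x y, dr_path s ls x y}.
Proof. by move=> to_c x y /to_c xc /to_c yc; apply: rst_trans xc (rst_sym yc). Qed.

Lemma net_dr_connected lab ls : is_net lab ls ->
  forall s, {in occs ls &, forall x y, dr_path s ls x y}.
Proof.
elim=> {ls} [a b _ _ _|s1 s2 l r c _ IH1 _ IH2 _ /pconcls_occs l1 /pconcls_occs r2 _ _ _
            |s0 l r c _ IH /pconcls_occs l0 /pconcls_occs r0 _ _ _|s0 s' /Permutation_mem P _ IH] s.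
- apply: (dr_path_root (c := b)) => x; rewrite !inE => /orP [/eqP ->|/eqP ->].
    by apply: (dr_path_link (L := IDL a b)); rewrite ?mem_head //= !eqxx.
  exact: rst_refl.
- set ls := TensL l r c :: s1 ++ s2; apply: (dr_path_root (c := c)) => x.
  have sub1 : {subset s1 <= ls} by move=> L Ls; rewrite !inE mem_cat Ls orbT.
  have sub2 : {subset s2 <= ls} by move=> L Ls; rewrite !inE mem_cat Ls !orbT.
  rewrite /occs /= -/(occs (s1 ++ s2)) occs_cat in_cons mem_cat.
  case/or3P => [/eqP ->|x1|x2]; first exact: rst_refl.
  + apply: rst_trans (dr_path_sub sub1 (IH1 s x l x1 l1)) _; apply: rst_sym.
    by apply: (dr_path_link (L := TensL l r c)); rewrite ?mem_head //= !eqxx.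
  + apply: rst_trans (dr_path_sub sub2 (IH2 s x r x2 r2)) _; apply: rst_sym.
    by apply: (dr_path_link (L := TensL l r c)); rewrite ?mem_head //= !eqxx orbT.
- set ls := ParL l r c :: s0; apply: (dr_path_root (c := c)) => x.
  have sub : {subset s0 <= ls} by move=> L Ls; rewrite inE Ls orbT.
  rewrite /occs /= -/(occs s0) in_cons => /orP [/eqP ->|x0]; first exact: rst_refl.
  have z0 : (if s c then l else r) \in occs s0 by case: (s c).
  apply: rst_trans (dr_path_sub sub (IH s x _ x0 z0)) _; apply: rst_sym.
  by apply: (dr_path_link (L := ParL l r c)); rewrite ?mem_head //= !eqxx.
- move=> x y; rewrite -!(eq_mem_occs P) => x0 y0.
  by apply: dr_path_sub (IH s x y x0 y0) => L; rewrite P.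
Qed.

(** * The translation of a proof net *)

Section Translation.
Variable ls : seq link.
Hypotheses (occs_uniq : uniq (occs ls)) (prems_uniq : uniq (allprems ls))
  (prems_occs : {in ls, forall L, {subset prems L <= occs ls}}).

Lemma producerP x L : producer ls x = Some L -> L \in ls /\ x \in concls L.
Proof. by move/ohead_mem; rewrite mem_filter => /andP []. Qed.

Lemma consumerP x L : consumer ls x = Some L -> L \in ls /\ x \in prems L.
Proof. by move/ohead_mem; rewrite mem_filter => /andP []. Qed.

Lemma producer_of L x : L \in ls -> x \in concls L -> producer ls x = Some L.
Proof.
move=> Ls xL; apply: ohead_filter_unique => // L' L's xL'.
exact: uniq_flatten_map_eq occs_uniq L's Ls xL' xL.
Qed.

Lemma consumer_of L x : L \in ls -> x \in prems L -> consumer ls x = Some L.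
Proof.
move=> Ls xL; apply: ohead_filter_unique => // L' L's xL'.
exact: uniq_flatten_map_eq prems_uniq L's Ls xL' xL.
Qed.

Lemma key_concl L : key L \in concls L.
Proof. by case: L => * /=; rewrite mem_head. Qed.

Lemma uniq_keys (p : pred link) : uniq [seq key L | L <- ls & p L].
Proof.
apply: subseq_uniq (map_subseq _ (filter_subseq p ls)) _.
exact: uniq_map_of_flatten key_concl occs_uniq.
Qed.

Definition occ_vertex (x : nat) : vertex :=
  if producer ls x is Some (ParL _ _ p) then inr p else inl (node_for ls x).

Variant occ_spec (x : nat) : vertex -> nid -> Prop :=
  | OccPar l r of ParL l r x \in ls : occ_spec x (inr x) (inr x)
  | OccNonPar L of L \in ls & ~~ isPar L & x \in concls L :
      occ_spec x (inl (inl (key L))) (inl (key L)).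

Lemma occP x : x \in occs ls -> occ_spec x (occ_vertex x) (node_for ls x).
Proof.
case/flatten_mapP => L Ls xL; rewrite /occ_vertex /node_for (producer_of Ls xL).
case: L Ls xL => [a b|l r c|l r c] Ls xL; try exact: OccNonPar.
by move: xL; rewrite inE => /eqP ->; apply: OccPar Ls.
Qed.

Lemma occ_vertex_nonpar L x : L \in ls -> ~~ isPar L -> x \in concls L ->
  occ_vertex x = inl (inl (key L)).
Proof. by move=> Ls nP xL; rewrite /occ_vertex /node_for (producer_of Ls xL); case: L Ls nP xL. Qed.

Lemma occ_vertex_par l r c : ParL l r c \in ls -> occ_vertex c = inr c.
Proof. by move=> Ls; rewrite /occ_vertex (producer_of Ls) ?mem_head. Qed.

Lemma T_up_par l r c : ParL l r c \in ls -> T_up ls c = node_for ls l.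
Proof. by move=> Ls; rewrite /T_up (producer_of Ls) ?mem_head. Qed.

Lemma T_down_tens l r c z : TensL l r c \in ls -> z \in [:: l; r] -> T_down ls z = Some (inl c).
Proof. by move=> Ls zL; rewrite /T_down (consumer_of Ls zL). Qed.

Lemma T_down_par l r c z : ParL l r c \in ls -> z \in [:: l; r] -> T_down ls z = Some (inr z).
Proof. by move=> Ls zL; rewrite /T_down (consumer_of Ls zL). Qed.

Lemma is_par_prem_par l r c z : ParL l r c \in ls -> z \in [:: l; r] -> is_par_prem ls z.
Proof. by move=> Ls zL; rewrite /is_par_prem (consumer_of Ls zL). Qed.

Lemma labelOf_left l r c : ParL l r c \in ls -> labelOf ls l = [:: ell c].
Proof. by move=> Ls; rewrite /labelOf (consumer_of Ls) ?mem_head ?eqxx. Qed.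

Lemma labelOf_right l r c : ParL l r c \in ls -> labelOf ls r = [:: rgt c].
Proof.
move=> Ls; have /andP [lr _] := uniq_flatten_map_mem prems_uniq Ls.
rewrite inE eq_sym in lr.
by rewrite /labelOf (consumer_of Ls) ?inE ?eqxx ?orbT // (negbTE lr).
Qed.

Lemma LN_nonpar L : L \in ls -> ~~ isPar L -> inl (key L) \in T_LN ls.
Proof. by move=> Ls nP; rewrite mem_cat map_f ?mem_filter ?nP. Qed.

Lemma LN_par l r c : ParL l r c \in ls -> is_par_prem ls c -> inr c \in T_LN ls.
Proof.
move=> Ls cP; rewrite mem_cat; apply/orP; right.
by apply/mapP; exists (ParL l r c); rewrite ?mem_filter ?cP.
Qed.

Variant LN_spec : nid -> Prop :=
  | LNNonPar L of L \in ls & ~~ isPar L : LN_spec (inl (key L))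
  | LNPar l r c of ParL l r c \in ls & is_par_prem ls c : LN_spec (inr c).

Lemma LNP n : n \in T_LN ls -> LN_spec n.
Proof.
rewrite mem_cat => /orP [] /mapP [L]; rewrite mem_filter => /andP [pL Ls] ->.
  exact: LNNonPar.
by case: L pL Ls => // l r c /= cP Ls; apply: LNPar Ls cP.
Qed.

Lemma PN_par l r c : ParL l r c \in ls -> c \in T_PN ls.
Proof. by move=> Ls; apply/mapP; exists (ParL l r c); rewrite ?mem_filter. Qed.

Lemma PNP c : c \in T_PN ls -> exists l r, ParL l r c \in ls.
Proof.
by case/mapP => L; rewrite mem_filter => /andP []; case: L => // l r c' _ Ls ->; exists l, r.
Qed.

Lemma node_for_LN x : x \in occs ls -> is_par_prem ls x -> node_for ls x \in T_LN ls.
Proof. by case/occP => [l r Ls|L Ls nP _] xP; [apply: LN_par Ls xP|apply: LN_nonpar]. Qed.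

Lemma labelOf_S_full x s : s \in labelOf ls x -> s \in S_full ls.
Proof.
rewrite /labelOf mem_cat; case E: (consumer ls x) => [[a b|l r c|l r c]|] //.
have [Ls _] := consumerP E.
by case: ifP => _; rewrite inE => /eqP ->; apply/orP; [left|right];
  apply/mapP; exists (ParL l r c); rewrite ?mem_filter.
Qed.

Lemma T_lbl_S_full n s : s \in T_lbl ls n -> s \in S_full ls.
Proof.
case: n => [k|p] /=; last exact: labelOf_S_full.
by case: (producer ls k) => [L|//] /flatten_mapP [x _ /labelOf_S_full].
Qed.

Lemma labelOf_node x s : x \in occs ls -> s \in labelOf ls x -> s \in T_lbl ls (node_for ls x).
Proof.
case/occP => [l r _|L Ls _ xL] //= sx.
by rewrite (producer_of Ls (key_concl L)); apply/flatten_mapP; exists x.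
Qed.

Lemma labelOf_rgt l r c x : ParL l r c \in ls -> rgt c \in labelOf ls x -> x = r.
Proof.
move=> Ls; rewrite /labelOf; case E: (consumer ls x) => [[a b|l' r' c'|l' r' c']|] //.
have [L's xL'] := consumerP E.
case: ifP => // xl; rewrite inE => /eqP [ec]; subst c'.
move: (uniq_flatten_map_eq occs_uniq L's Ls (mem_head c [::]) (mem_head c [::])) => -[el er].
by move: xL' xl; rewrite el er !inE => /orP [/eqP ->|/eqP //]; rewrite eqxx.
Qed.

Lemma T_rgt_holder l r c n : ParL l r c \in ls -> n \in T_LN ls ->
  rgt c \in T_lbl ls n -> n = node_for ls r.
Proof.
move=> Ls /LNP [L L's nP|l' r' c' L's _] /=.
  rewrite (producer_of L's (key_concl L)) => /flatten_mapP [x xL /(labelOf_rgt Ls) xr].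
  by rewrite -xr /node_for (producer_of L's xL); case: L L's nP xL.
by move/(labelOf_rgt Ls) <-; rewrite /node_for (producer_of L's) ?mem_head.
Qed.

Definition T_deNM : deNM :=
  mkT (T_LN ls) (T_lbl ls) (T_PN ls) (T_up ls) (T_down ls) (T_ladj ls).

Lemma T_LN_uniq : uniq (T_LN ls).
Proof.
rewrite cat_uniq (map_comp inl key) (map_comp inr key).
rewrite !(map_inj_uniq inl_inj) !(map_inj_uniq inr_inj) !uniq_keys andbT /=.
by apply/hasPn => n /mapP [? _ ->]; apply/mapP => -[].
Qed.

Lemma T_S_fullE s : s \in S_full ls <-> exists2 n, n \in T_LN ls & s \in T_lbl ls n.
Proof.
split=> [|[n _ /T_lbl_S_full //]].
rewrite mem_cat => /orP [] /mapP [L]; rewrite mem_filter => /andP [];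
  case: L => // l r c _ Ls ->.
- have lP : is_par_prem ls l by apply: is_par_prem_par Ls (mem_head _ _).
  have lo : l \in occs ls by apply: prems_occs Ls _ (mem_head _ _).
  exists (node_for ls l); first exact: node_for_LN.
  by apply: labelOf_node lo _; rewrite (labelOf_left Ls) mem_head.
- have rin : r \in [:: l; r] by rewrite !inE eqxx orbT.
  have rP : is_par_prem ls r by apply: is_par_prem_par Ls rin.
  have ro : r \in occs ls by apply: prems_occs Ls _ rin.
  exists (node_for ls r); first exact: node_for_LN.
  by apply: labelOf_node ro _; rewrite (labelOf_right Ls) mem_head.
Qed.

Section Switching.
Variable sg : nat -> nid.
Hypothesis sw : switching T_deNM sg.

Let path := switch_path T_deNM sg.

Lemma par_prem_path l r c z : ParL l r c \in ls -> z \in [:: l; r] ->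
  sg c = node_for ls z -> path (inr c) (occ_vertex z).
Proof.
move=> Ls zin; have cP := PN_par Ls.
case: (occP (prems_occs Ls zin)) => [l' r' L's|L L's nP zL] sgc.
  apply: (@rst_trans _ _ _ (inl (inr z))); [apply: rst_sym|]; apply: rst_step => /=.
    by rewrite cP sgc eqxx orbT.
  by rewrite (PN_par L's) (T_down_par Ls zin) eqxx.
by apply: rst_sym; apply: rst_step; rewrite /= cP sgc eqxx orbT.
Qed.

Lemma tens_prem_path l r c z : TensL l r c \in ls -> z \in [:: l; r] ->
  path (occ_vertex z) (occ_vertex c).
Proof.
move=> Ls zin; have zo := prems_occs Ls zin.
rewrite [occ_vertex c](occ_vertex_nonpar Ls) ?mem_head //=.
case: (occP zo) => [l' r' L's|L L's nP zL].
  by apply: rst_sym; apply: rst_step; rewrite /= (PN_par L's) (T_down_tens Ls zin) eqxx.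
apply: rst_step; apply/hasP; exists z => //.
by rewrite (consumer_of Ls zin) (producer_of L's zL) nP !eqxx.
Qed.

Lemma dr_edge_path L x y : L \in ls -> dr_edge (fun c => sg c == T_up ls c) L x y ->
  path (occ_vertex x) (occ_vertex y).
Proof.
case: L => [a b|l r c|l r c] Ls /= /andP [/eqP -> yL].
- rewrite (eqP yL) !(occ_vertex_nonpar Ls) ?inE ?eqxx ?orbT //.
  exact: rst_refl.
- by apply: rst_sym; apply: tens_prem_path Ls _; rewrite !inE.
rewrite (eqP yL) (occ_vertex_par Ls); case: eqP => [sgc|/eqP ne].
  have sgl : sg c = node_for ls l by rewrite sgc (T_up_par Ls).
  exact: par_prem_path Ls (mem_head _ _) sgl.
have [/= sgc|[/= sgL rs]] := sw (PN_par Ls); first by rewrite sgc eqxx in ne.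
apply: par_prem_path Ls _ (T_rgt_holder Ls sgL rs).
by rewrite !inE eqxx orbT.
Qed.

Lemma vertex_reached_from_occ v : is_vertex T_deNM v ->
  exists2 z, z \in occs ls & path (occ_vertex z) v.
Proof.
case: v => [n|c] /=.
  case/LNP => [L Ls nP|l r c Ls cP].
    exists (key L); first by apply/flatten_mapP; exists L; rewrite ?key_concl.
    by rewrite (occ_vertex_nonpar Ls nP (key_concl L)); apply: rst_refl.
  exists c; first by apply/flatten_mapP; exists (ParL l r c); rewrite ?mem_head.
  rewrite (occ_vertex_par Ls); apply: rst_sym; apply: rst_step => /=.
  move: cP; rewrite (PN_par Ls) /is_par_prem /T_down.
  by case: (consumer ls c) => [[]|] //= *; rewrite eqxx.
case/PNP => l [r Ls]; exists c; first by apply/flatten_mapP; exists (ParL l r c); rewrite ?mem_head.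
by rewrite (occ_vertex_par Ls); apply: rst_refl.
Qed.

End Switching.

Lemma T_deNM_connected lab : is_net lab ls -> switch_connected T_deNM.
Proof.
move=> net sg sw x y.
move=> /(vertex_reached_from_occ sg) [zx zxo px] /(vertex_reached_from_occ sg) [zy zyo py].
apply: rst_trans (rst_sym px) (rst_trans _ py).
apply: (crst_map (f := occ_vertex)) (net_dr_connected net _ zxo zyo) => u v [L Ls].
exact: dr_edge_path.
Qed.

Lemma T_deNM_wf lab : is_net lab ls -> wf_deNM ls T_deNM.
Proof.
move=> net; constructor => /=.
- exact: T_LN_uniq.
- move=> c /PNP [l [r Ls]]; rewrite (T_up_par Ls).
  apply: (labelOf_node (prems_occs Ls (mem_head l [:: r]))).
  by rewrite (labelOf_left Ls) mem_head.
- exact: T_S_fullE.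
- move=> c /PNP [l [r Ls]]; rewrite mem_cat; apply/orP; right.
  by apply/mapP; exists (ParL l r c); rewrite ?mem_filter.
- move=> u v; apply: eq_has => x.
  case: (consumer ls x) => [[a b|l r t|l r t]|] //; case: (producer ls x) => // L.
  by rewrite orbC.
- move=> u v /hasP [x _]; case E1: (consumer ls x) => [[a b|l r t|l r t]|] //.
  case E2: (producer ls x) => [L|] // /andP [nP /orP [/andP [/eqP -> _]|/andP [_ /eqP ->]]].
    exact: LN_nonpar (proj1 (producerP E2)) nP.
  exact: (LN_nonpar (L := TensL l r t)) (proj1 (consumerP E1)) _.
- move=> c m /PNP [l [r Ls]]; rewrite /T_down.
  case E: (consumer ls c) => [[a b|l' r' t|l' r' c']|] // [<-].
    exact: (LN_nonpar (L := TensL l' r' t)) (proj1 (consumerP E)) _.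
  by apply: LN_par Ls _; rewrite /is_par_prem E.
- exact: T_deNM_connected net.
Qed.

End Translation.

Lemma single_ID_wf a b : wf_deNM [:: IDL a b] (T_tree [:: IDL a b]).
Proof.
constructor => //=; first by move=> s; split=> // -[n].
by move=> sg _ [[u|u]|L] [[v|v]|M] //=; rewrite !inE => /eqP [->] /eqP [->]; apply: rst_refl.
Qed.

Lemma T_treeE ls : (exists a b, ls = [:: IDL a b]) \/ T_tree ls = T_deNM ls.
Proof. by case: ls => [|[a b|? ? ?|? ? ?] [|? ?]]; [right|left; exists a, b|right..]. Qed.

Lemma T_tree_wf ls lab : proof_structure ls lab -> is_net lab ls -> wf_deNM ls (T_tree ls).
Proof.
case=> occs_uniq prems_uniq /allP prems_ok _ net.
have [[a [b ->]]|->] := @T_treeE ls; first exact: single_ID_wf.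
have prems_occs : {in ls, forall L, {subset prems L <= occs ls}}.
  by move=> L /prems_ok /allP sub x /sub /andP [].
exact: T_deNM_wf occs_uniq prems_uniq prems_occs lab net.
Qed.

Theorem lemma1 (ls : seq link) (lab : nat -> formula) :
  proof_structure ls lab -> algoA_no_at_step5 ls -> ~ is_net lab ls.
Proof.
move=> PS [_ [a0 [t [a [J [a0T runT stuck_ta not_accepting]]]]]] net.
have [w aL] := run_wf (T_tree_wf PS net) a0T runT.
exact: not_accepting (stuck_accepting w aL stuck_ta).
Qed.
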